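(* The quotient $\boldsymbol{T}[X_1,\ldots,X_n]/\boldsymbol{E}(\boldsymbol{T}^n)_0$ is cancellative, i.e. whenever $x\cdot y=x\cdot z$ in it, either $x=0$ or $y=z$.
   Context: $\boldsymbol{T}=\mathbb{R}\cup\{-\infty\}$ with $a\oplus b=\max\{a,b\}$, $a\odot b=a+b$; its zero is $-\infty$. $\boldsymbol{T}[X_1,\ldots,X_n]$ is the semiring of tropical polynomials in $n$ variables. $\boldsymbol{E}(\boldsymbol{T}^n)_0=\{(f,g)\in\boldsymbol{T}[X_1,\ldots,X_n]^2\mid f(x)=g(x)\ \forall x\in\boldsymbol{T}^n\}$, a congruence; the quotient is the semiring of tropical polynomial functions on $\boldsymbol{T}^n$. *)

From Stdlib Require Import Reals.
From mathcomp Require Import all_boot.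

Set Implicit Arguments.
Unset Strict Implicit.
Unset Printing Implicit Defensive.

(* The tropical semiring T = R ∪ {-oo}: None is -oo (the tropical zero). *)
Definition trop := option R.

Definition tzero : trop := None.
Definition tone : trop := Some R0.

Definition tadd (a b : trop) : trop :=
  match a, b with
  | None, y => y
  | x, None => x
  | Some x, Some y => Some (Rmax x y)
  end.

Definition tmul (a b : trop) : trop :=
  match a, b with
  | Some x, Some y => Some (Rplus x y)
  | _, _ => None
  end.

Definition tpow (a : trop) (k : nat) : trop := iter k (tmul a) tone.

Definition tpoint (n : nat) := 'I_n -> trop.

(* A monomial c ⊙ X_1^{a_1} ⊙ ... ⊙ X_n^{a_n}: coefficient and exponent vector. *)
Definition tmono (n : nat) := (trop * ('I_n -> nat))%type.

Definition tpoly (n : nat) := seq (tmono n).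

Definition tpoly0 (n : nat) : tpoly n := [::].

Definition mono_eval n (m : tmono n) (x : tpoint n) : trop :=
  foldr (fun i acc => tmul (tpow (x i) (m.2 i)) acc) m.1 (enum 'I_n).

Definition tpoly_eval n (p : tpoly n) (x : tpoint n) : trop :=
  foldr (fun m acc => tadd (mono_eval m x) acc) tzero p.

Definition mono_mul n (m m' : tmono n) : tmono n :=
  (tmul m.1 m'.1, fun i => (m.2 i + m'.2 i)%N).

Definition tpoly_mul n (p q : tpoly n) : tpoly n :=
  [seq mono_mul m m' | m <- p, m' <- q].

(* the congruence E(T^n)_0: equality as functions on T^n *)
Definition tfun_eq n (f g : tpoly n) : Prop :=
  forall x : tpoint n, tpoly_eval f x = tpoly_eval g x.

From Stdlib Require Import Reals Lra Classical.
From mathcomp Require Import all_boot.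

(* Evaluation is a semiring morphism from tropical polynomials to functions on
   T^n, so f g = f h holds pointwise.  If f is not identically -oo, one of its
   monomials has a finite coefficient, so f is finite on R^n, where tropical
   multiplication by f(y) is cancellable: g = h on R^n.  Finally every value
   p(x) is a limit of values on R^n: if x_s replaces the -oo coordinates of x
   by s, then p(x) <= p(x_s) <= max(p(x), s + p(x_0)) for s <= 0, so the real
   lower bounds of p(x) are exactly the common lower bounds of the p(x_s). *)

Set Implicit Arguments.
Unset Strict Implicit.
Unset Printing Implicit Defensive.

Local Open Scope R_scope.

Ltac Rmax_cases := unfold Rmax in *; repeat match goal with
  | |- context [Rle_dec ?a ?b] => destruct (Rle_dec a b)
  | H : context [Rle_dec ?a ?b] |- _ => destruct (Rle_dec a b)
  end; try lra.

Definition tle (a b : trop) : Prop :=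
  match a, b with
  | None, _ => True
  | Some _, None => False
  | Some x, Some y => x <= y
  end.

Lemma tle_refl a : tle a a.
Proof. by case: a => //= r; lra. Qed.

Lemma tle_trans a b c : tle a b -> tle b c -> tle a c.
Proof. by case: a; case: b; case: c => //= *; lra. Qed.

Lemma tmulC a b : tmul a b = tmul b a.
Proof. by case: a; case: b => //= *; f_equal; lra. Qed.

Lemma tmulA a b c : tmul a (tmul b c) = tmul (tmul a b) c.
Proof. by case: a; case: b; case: c => //= *; f_equal; lra. Qed.

Lemma tmulACA a b c d : tmul (tmul a b) (tmul c d) = tmul (tmul a c) (tmul b d).
Proof. by case: a; case: b; case: c; case: d => //= *; f_equal; lra. Qed.

Lemma tmul1r a : tmul tone a = a.
Proof. by case: a => //= r; f_equal; lra. Qed.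

Lemma tmulr0 a : tmul a tzero = tzero.
Proof. by case: a. Qed.

Lemma tmulI a b c : isSome a -> tmul a b = tmul a c -> b = c.
Proof. by case: a => // r _; case: b; case: c => //= u v [] ?; f_equal; lra. Qed.

Lemma taddA a b c : tadd a (tadd b c) = tadd (tadd a b) c.
Proof. by case: a; case: b; case: c => //= *; f_equal; Rmax_cases. Qed.

Lemma tmulDr a b c : tmul a (tadd b c) = tadd (tmul a b) (tmul a c).
Proof. by case: a; case: b; case: c => //= *; f_equal; Rmax_cases. Qed.

Lemma tmulDl a b c : tmul (tadd b c) a = tadd (tmul b a) (tmul c a).
Proof. by rewrite tmulC tmulDr !(tmulC a). Qed.

Lemma tadd_ubl a b : tle a (tadd a b).
Proof. by case: a; case: b => //= *; Rmax_cases. Qed.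

Lemma tadd_ubr a b : tle b (tadd a b).
Proof. by case: a; case: b => //= *; Rmax_cases. Qed.

Lemma tadd_lub a b c : tle a c -> tle b c -> tle (tadd a b) c.
Proof. by case: a; case: b; case: c => //= *; Rmax_cases. Qed.

Lemma tmul_mono a a' b b' : tle a a' -> tle b b' -> tle (tmul a b) (tmul a' b').
Proof. by case: a; case: a'; case: b; case: b' => //= *; lra. Qed.

Lemma isSome_tadd a b : isSome (tadd a b) = isSome a || isSome b.
Proof. by case: a; case: b. Qed.

Lemma isSome_tmul a b : isSome (tmul a b) = isSome a && isSome b.
Proof. by case: a; case: b. Qed.

Lemma tpowS a k : tpow a k.+1 = tmul a (tpow a k).
Proof. by []. Qed.

Lemma tpowD a j k : tpow a (j + k) = tmul (tpow a j) (tpow a k).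
Proof.
elim: j => [|j IH]; first by rewrite add0n tmul1r.
by rewrite addSn !tpowS IH tmulA.
Qed.

Lemma tpow_Some r k : tpow (Some r) k = Some (INR k * r).
Proof.
elim: k => [|k IH]; first by rewrite /tpow /= Rmult_0_l.
by rewrite tpowS IH S_INR /=; f_equal; lra.
Qed.

Lemma tpow_mono a b k : tle a b -> tle (tpow a k) (tpow b k).
Proof.
move=> ab; elim: k => [|k IH]; first exact: tle_refl.
by rewrite !tpowS; apply: tmul_mono.
Qed.

Lemma isSome_tpow a k : isSome (tpow a k) = isSome a || (k == 0)%N.
Proof. by case: a => [r|]; [rewrite tpow_Some | case: k]. Qed.

Lemma trop_lbound_eq u v :
  (forall b, tle (Some b) u <-> tle (Some b) v) -> u = v.
Proof.
case: u => [a|]; case: v => [c|] //= uv.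
- by have /uv := Rle_refl a; have /uv := Rle_refl c; move=> *; f_equal; lra.
- by case: (uv a) => /(_ (Rle_refl a)).
- by case: (uv c) => _ /(_ (Rle_refl c)).
Qed.

Section TropicalPolynomials.
Variable n : nat.
Implicit Types (m : tmono n) (p q : tpoly n) (x y : tpoint n).

Definition mono_eval_on (l : seq 'I_n) m y : trop :=
  foldr (fun i acc => tmul (tpow (y i) (m.2 i)) acc) m.1 l.

Lemma mono_eval_on_cons i l m y :
  mono_eval_on (i :: l) m y = tmul (tpow (y i) (m.2 i)) (mono_eval_on l m y).
Proof. by []. Qed.

Lemma mono_evalE m y : mono_eval m y = mono_eval_on (enum 'I_n) m y.
Proof. by []. Qed.

Lemma mono_eval_on_mul l m m' y :
  mono_eval_on l (mono_mul m m') y = tmul (mono_eval_on l m y) (mono_eval_on l m' y).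
Proof. by elim: l => [|i l IH] //=; rewrite IH tpowD tmulACA. Qed.

Lemma mono_eval_mul m m' y :
  mono_eval (mono_mul m m') y = tmul (mono_eval m y) (mono_eval m' y).
Proof. exact: mono_eval_on_mul. Qed.

Lemma tpoly_eval_cons m p y :
  tpoly_eval (m :: p) y = tadd (mono_eval m y) (tpoly_eval p y).
Proof. by []. Qed.

Lemma tpoly_eval_cat p q y :
  tpoly_eval (p ++ q) y = tadd (tpoly_eval p y) (tpoly_eval q y).
Proof. by elim: p => [|m p IH] //=; rewrite IH taddA. Qed.

Lemma tpoly_eval_mul p q y :
  tpoly_eval (tpoly_mul p q) y = tmul (tpoly_eval p y) (tpoly_eval q y).
Proof.
have eval_map m : tpoly_eval [seq mono_mul m m' | m' <- q] y
                  = tmul (mono_eval m y) (tpoly_eval q y).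
  elim: q => [|m' q IH] /=; first by rewrite tmulr0.
  by rewrite IH mono_eval_mul tmulDr.
elim: p => [|m p IH] //=.
by rewrite tpoly_eval_cat eval_map IH tmulDl.
Qed.

Definition finite_factors l m y : bool := all (fun i => isSome (tpow (y i) (m.2 i))) l.

Lemma finite_factors_cons i l m y :
  finite_factors (i :: l) m y = isSome (tpow (y i) (m.2 i)) && finite_factors l m y.
Proof. by []. Qed.

Lemma isSome_mono_eval_on l m y :
  isSome (mono_eval_on l m y) = isSome m.1 && finite_factors l m y.
Proof. by elim: l => [|i l IH] /=; rewrite ?andbT // isSome_tmul IH andbCA. Qed.

Lemma isSome_tpoly_eval p y :
  isSome (tpoly_eval p y) = has (fun m => isSome (mono_eval m y)) p.
Proof. by elim: p => [|m p IH] //=; rewrite isSome_tadd IH. Qed.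

Definition finite_point y : Prop := forall i, isSome (y i).

Lemma isSome_tpoly_eval_finite p x y :
  finite_point y -> isSome (tpoly_eval p x) -> isSome (tpoly_eval p y).
Proof.
move=> fin_y; rewrite !isSome_tpoly_eval; apply: sub_has => m.
rewrite !mono_evalE !isSome_mono_eval_on => /andP[-> _] /=.
by apply/allP => i _; rewrite isSome_tpow fin_y.
Qed.

Definition fill x (s : R) : tpoint n :=
  fun i => if x i is Some r then Some r else Some s.

Lemma fill_finite x s : finite_point (fill x s).
Proof. by move=> i; rewrite /fill; case: (x i). Qed.

Lemma fill_mono x s t i : s <= t -> tle (fill x s i) (fill x t i).
Proof. by rewrite /fill; case: (x i) => /= *; lra. Qed.

Lemma mono_eval_on_fill_mono l m x s t :
  s <= t -> tle (mono_eval_on l m (fill x s)) (mono_eval_on l m (fill x t)).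
Proof.
move=> st; elim: l => [|i l IH] /=; first exact: tle_refl.
by apply: tmul_mono => //; apply/tpow_mono/fill_mono.
Qed.

Lemma mono_eval_on_fill l m x s :
  finite_factors l m x ->
  mono_eval_on l m (fill x s) = mono_eval_on l m x.
Proof.
elim: l => [|i l IH] //= /andP[fin_i /IH ->]; congr tmul.
by move: fin_i; rewrite /fill isSome_tpow; case: (x i) => //= /eqP ->.
Qed.

(* A factor X_i^k with k > 0 at a -oo coordinate contributes k s <= s. *)
Lemma mono_eval_on_fill_le l m x s : s <= 0 ->
  ~~ finite_factors l m x ->
  tle (mono_eval_on l m (fill x s)) (tmul (Some s) (mono_eval_on l m (fill x 0))).
Proof.
move=> s_le0; elim: l => [|i l IH] //.
rewrite !mono_eval_on_cons finite_factors_cons negb_and; case/orP=> [inf_i|/IH le_l].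
- rewrite tmulA; apply: tmul_mono; last exact: mono_eval_on_fill_mono.
  move: inf_i; rewrite /fill isSome_tpow; case: (x i) => //=.
  case: (m.2 i) => // k _; rewrite !tpow_Some S_INR /=.
  by have := pos_INR k; nra.
- rewrite tmulA (tmulC (Some s)) -tmulA.
  by apply: tmul_mono => //; apply/tpow_mono/fill_mono.
Qed.

Lemma tpoly_eval_le_fill p x s : tle (tpoly_eval p x) (tpoly_eval p (fill x s)).
Proof.
elim: p => [|m p IH] //=; apply: tadd_lub.
- rewrite !mono_evalE; have [fin|inf] := boolP (finite_factors (enum 'I_n) m x).
    by rewrite mono_eval_on_fill //; apply: tadd_ubl.
  have := isSome_mono_eval_on (enum 'I_n) m x; rewrite (negbTE inf) andbF.
  by case: (mono_eval_on _ m x).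
- exact: tle_trans IH (tadd_ubr _ _).
Qed.

Lemma tpoly_eval_fill_le p x s : s <= 0 ->
  tle (tpoly_eval p (fill x s))
      (tadd (tpoly_eval p x) (tmul (Some s) (tpoly_eval p (fill x 0)))).
Proof.
move=> s_le0; elim: p => [|m p IH] //; rewrite !tpoly_eval_cons tmulDr.
apply: tadd_lub; last first.
  apply: tle_trans IH _; apply: tadd_lub.
    by apply: tle_trans (tadd_ubl _ _); apply: tadd_ubr.
  by apply: tle_trans (tadd_ubr _ _); apply: tadd_ubr.
rewrite !mono_evalE; have [fin|inf] := boolP (finite_factors (enum 'I_n) m x).
  rewrite mono_eval_on_fill //.
  by apply: tle_trans (tadd_ubl _ _); apply: tadd_ubl.
apply: tle_trans (mono_eval_on_fill_le s_le0 inf) _.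
by apply: tle_trans (tadd_ubr _ _); apply: tadd_ubl.
Qed.

Lemma tpoly_eval_lbound_fill p x b :
  tle (Some b) (tpoly_eval p x) <-> forall s, tle (Some b) (tpoly_eval p (fill x s)).
Proof.
split=> [bx s|bfill]; first exact: tle_trans bx (tpoly_eval_le_fill p x s).
(* Chosen so that s + p(x_0) < b. *)
pose s := if tpoly_eval p (fill x 0) is Some c then Rmin 0 (b - c - 1) else 0.
have s_le0 : s <= 0 by rewrite /s; case: (tpoly_eval p _) => [c|]; [apply: Rmin_l | lra].
have := tle_trans (bfill s) (tpoly_eval_fill_le p x s_le0).
rewrite /s; case: (tpoly_eval p (fill x 0)) => [c|]; case: (tpoly_eval p x) => //= [a|];
  by have := Rmin_r 0 (b - c - 1); Rmax_cases.
Qed.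

End TropicalPolynomials.

Theorem lemma3p1 (n : nat) (f g h : tpoly n) :
  tfun_eq (tpoly_mul f g) (tpoly_mul f h) ->
  tfun_eq f (tpoly0 n) \/ tfun_eq g h.
Proof.
move=> fg_fh.
have [[x0 fin_fx0]|f_inf] := classic (exists x0, isSome (tpoly_eval f x0)); last first.
  by left=> x; case fx: (tpoly_eval f x) => //; case: f_inf; exists x; rewrite fx.
have gh_finite y : finite_point y -> tpoly_eval g y = tpoly_eval h y.
  move=> fin_y; apply: (tmulI (isSome_tpoly_eval_finite fin_y fin_fx0)).
  by rewrite -!tpoly_eval_mul fg_fh.
right=> x; apply: trop_lbound_eq => b; rewrite !tpoly_eval_lbound_fill.
have gh_fill s : tpoly_eval g (fill x s) = tpoly_eval h (fill x s).
  exact/gh_finite/fill_finite.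
by split=> lb s; [rewrite -gh_fill | rewrite gh_fill].
Qed.
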